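(* Let $f : \{0, 1\}^n \to \{0, 1\}$ be a symmetric Boolean function. Then $\mathsf{NAADT}(f) = O(\mathsf{D}_{\mathrm{cc}}(f \circ \mathsf{AND})^2)$.
   Context: $f$ is symmetric if $f(x)$ depends only on the Hamming weight of $x$. For $S\subseteq[n]$, $\mathsf{AND}_S(x)=\prod_{i\in S}x_i$. $\mathsf{NAADT}(f)$ (non-adaptive AND decision tree complexity) is the minimum $k$ for which there exist $S_1,\dots,S_k\subseteq[n]$ such that $f(x)$ is determined by the values $\mathsf{AND}_{S_1}(x),\dots,\mathsf{AND}_{S_k}(x)$ for all $x\in\{0,1\}^n$. $f\circ\mathsf{AND}$ is the two-party function $(x,y)\mapsto f(x_1\wedge y_1,\dots,x_n\wedge y_n)$ with Alice holding $x$, Bob holding $y$, and $\mathsf{D}_{\mathrm{cc}}$ is deterministic (two-way) communication complexity. *)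

From mathcomp Require Import all_boot.
Set Implicit Arguments. Unset Strict Implicit. Unset Printing Implicit Defensive.

Notation bvec n := {ffun 'I_n -> bool}.

Definition hweight n (x : bvec n) : nat := #|[set i | x i]|.

Definition symmetric_fun n (f : bvec n -> bool) : Prop :=
  forall x y : bvec n, hweight x = hweight y -> f x = f y.

Definition AND_S n (S : {set 'I_n}) (x : bvec n) : bool := [forall i in S, x i].

Definition determines n (f : bvec n -> bool) (Ss : seq {set 'I_n}) : Prop :=
  forall x y : bvec n, (forall S, S \in Ss -> AND_S S x = AND_S S y) -> f x = f y.

Definition naadt_le n (f : bvec n -> bool) (k : nat) : Prop :=
  exists Ss : seq {set 'I_n}, size Ss = k /\ determines f Ss.

Definition NAADT_is n (f : bvec n -> bool) (k : nat) : Prop :=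
  naadt_le f k /\ forall k', naadt_le f k' -> k <= k'.

Inductive protocol (X Y : Type) : Type :=
  | PLeaf of bool
  | PAlice of (X -> bool) & protocol X Y & protocol X Y
  | PBob of (Y -> bool) & protocol X Y & protocol X Y.

Fixpoint peval X Y (P : protocol X Y) (x : X) (y : Y) : bool :=
  match P with
  | PLeaf b => b
  | PAlice a P0 P1 => if a x then peval P1 x y else peval P0 x y
  | PBob b P0 P1 => if b y then peval P1 x y else peval P0 x y
  end.

(* Communication cost = depth of the protocol tree (bits sent on worst path). *)
Fixpoint pdepth X Y (P : protocol X Y) : nat :=
  match P with
  | PLeaf _ => 0
  | PAlice _ P0 P1 => (maxn (pdepth P0) (pdepth P1)).+1
  | PBob _ P0 P1 => (maxn (pdepth P0) (pdepth P1)).+1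
  end.

Definition dcc_le X Y (F : X -> Y -> bool) (d : nat) : Prop :=
  exists P : protocol X Y, (forall x y, peval P x y = F x y) /\ pdepth P <= d.

Definition Dcc_is X Y (F : X -> Y -> bool) (d : nat) : Prop :=
  dcc_le F d /\ forall d', dcc_le F d' -> d <= d'.

Definition compAND n (f : bvec n -> bool) (x y : bvec n) : bool :=
  f [ffun i => x i && y i].

(* Let g(w) = f(1^w 0^(n-w)).  If the t-th finite difference of g at 0 is
   nonzero, then combining the rows of the communication matrix of f o AND
   indexed by the t-subsets S of [n] with alternating signs over the subsets
   of S yields a nonzero multiple of the identity on t-subsets, so
   C(n, t) <= 2^D where D is the depth of any protocol.  Let t be the first
   weight where g changes.
   If t < n/2, then g is a non-constant 0/1 function on [0, n/2]; such a
   function is not a polynomial of degree < n/4, so some difference of order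
   s >= n/4 is nonzero and n = O(D), while NAADT(f) <= n.
   Otherwise f only depends on whether its input has more than R = n - t
   zeros, and C(n, R) <= 2^D gives R log n = O(D).  The zero set of an input
   with at most R zeros is read off the ANDs over all residue classes modulo
   q <= X = O(R log n): a position outside the zero set is separated from it
   modulo some q, since the product of its distances to the zeros is below
   n^R < lcm(1, ..., X).  Hence NAADT(f) <= X^2 = O(D^2). *)

From mathcomp Require Import all_boot all_algebra ring zify.
Set Implicit Arguments. Unset Strict Implicit. Unset Printing Implicit Defensive.
Import GRing.Theory Num.Theory.

Section FiniteDifferences.
Local Open Scope ring_scope.
Variable R : comRingType.
Implicit Types (h : nat -> R) (c k s : nat).

Definition fdiff h : nat -> R := fun x => h x.+1 - h x.
Definition fdiffn k h : nat -> R := iter k fdiff h.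

Lemma fdiffnS k h : fdiffn k.+1 h = fdiffn k (fdiff h).
Proof. by rewrite /fdiffn iterSr. Qed.

Lemma fdiffnSE k h x : fdiffn k.+1 h x = fdiffn k h x.+1 - fdiffn k h x.
Proof. by []. Qed.

Lemma fdiffn_step s h c : (0 < s)%N ->
  (forall i, (i < s)%N -> h (c + i)%N = h c) -> fdiffn s h c = h (c + s)%N - h c.
Proof.
elim: s h => // s IH h _ hc.
case: s IH hc => [|s] IH hc; first by rewrite /fdiffn /= /fdiff addn1.
have hc1 : h c.+1 = h c by rewrite -addn1 hc.
rewrite fdiffnS IH //; last first.
  by move=> i lti; rewrite /fdiff -!addnS !hc ?hc1 // (leq_trans lti).
by rewrite /fdiff -!addnS hc1 (hc s.+1) // subrr subr0.
Qed.

Lemma newton_forward h c k : h (c + k)%N = \sum_(s < k.+1) fdiffn s h c *+ 'C(k, s).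
Proof.
elim: k c => [|k IH] c; first by rewrite big_ord1 addn0.
have shift s : fdiffn s h c.+1 = fdiffn s.+1 h c + fdiffn s h c.
  by rewrite fdiffnSE subrK.
rewrite addnS -addSn IH.
under eq_bigr => s _ do rewrite shift mulrnDl.
rewrite big_split /= [X in _ + X]big_ord_recl [in RHS]big_ord_recl /=.
under [in RHS]eq_bigr => s _ do rewrite binS mulrnDr.
rewrite big_split /= [X in _ = _ + (X + _)]big_ord_recr /= (bin_small (ltnSn k)) mulr0n addr0.
by rewrite !bin0 [LHS]addrC -addrA.
Qed.

Lemma rpred_fdiffn (S : zmodClosed R) k h a :
  (forall i, (i <= k)%N -> h (a + i)%N \in S) -> fdiffn k h a \in S.
Proof.
elim: k h => [|k IH] h hS; first by have := hS 0%N (leqnn 0); rewrite addn0.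
rewrite fdiffnS; apply: IH => i ik; rewrite /fdiff rpredB //.
  by rewrite -addnS hS.
by rewrite hS // (leq_trans ik).
Qed.

End FiniteDifferences.

Section SubsetSums.
Local Open Scope ring_scope.
Variables (R : comRingType) (I : finType).
Implicit Types (S T U : {set I}) (phi : {set I} -> R) (h : nat -> R).

Lemma sum_subsets_split S i phi : i \in S ->
  \sum_(T : {set I} | T \subset S) phi T =
  \sum_(T : {set I} | T \subset S :\ i) (phi T + phi (i |: T)).
Proof.
move=> iS; rewrite (bigID (fun T => i \in T)) /= addrC big_split /=.
congr (_ + _); first by apply: eq_bigl => T; rewrite subsetD1.
rewrite (reindex_onto (fun T => i |: T) (fun T => T :\ i)) /=; last first.
  by move=> T /andP[_ iT]; rewrite setD1K.
apply: eq_bigl => T; rewrite setU11 andbT subUset sub1set iS subsetD1 /=.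
congr (_ && _); apply/eqP/idP => [<-|iT]; first by rewrite setD11.
by rewrite setU1K.
Qed.

Lemma sum_subsets_eq0 S i phi : i \in S ->
  (forall T, T \subset S :\ i -> phi (i |: T) = - phi T) ->
  \sum_(T : {set I} | T \subset S) phi T = 0.
Proof.
by move=> iS phiN; rewrite (sum_subsets_split _ iS) big1 // => T /phiN ->; rewrite addrN.
Qed.

Lemma sum_subsets_alternating S h :
  \sum_(T : {set I} | T \subset S) (-1) ^+ (#|S| - #|T|) * h #|T| = fdiffn #|S| h 0.
Proof.
move eqk : #|S| => k; elim: k S h eqk => [|k IH] S h eqk.
  move/eqP: eqk; rewrite cards_eq0 => /eqP ->.
  rewrite (big_pred1 set0) ?cards0 ?expr0 ?mul1r // => T.
  by rewrite subset0.
have [i iS] : {i | i \in S} by apply/sigW/card_gt0P; rewrite eqk.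
have cardSi : #|S :\ i| = k by move: eqk; rewrite (cardsD1 i) iS add1n => -[].
rewrite (sum_subsets_split _ iS) fdiffnS -(IH (S :\ i) (fdiff h) cardSi).
apply: eq_bigr => T TS.
have iT : i \notin T by move: TS; rewrite subsetD1 => /andP[].
have Tk : (#|T| <= k)%N by rewrite -cardSi; exact: subset_leq_card.
rewrite cardsU1 iT add1n subSS subSn // exprS /fdiff.
ring.
Qed.

Lemma sum_subsets_alternating_meet S T t h : #|S| = t -> #|T| = t ->
  \sum_(U : {set I} | U \subset S) (-1) ^+ (t - #|U|) * h #|U :&: T| =
  if S == T then fdiffn t h 0 else 0.
Proof.
move=> cardS cardT; case: eqP => [<-|neqST].
  rewrite -cardS -sum_subsets_alternating; apply: eq_bigr => U US.
  by rewrite (setIidPl US).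
have [e eS eT] : exists2 e, e \in S & e \notin T.
  apply/subsetPn/negP => subST; apply: neqST; apply/eqP.
  by rewrite eqEcard subST cardS cardT /=.
apply: (sum_subsets_eq0 eS) => U US.
have eU : e \notin U by move: US; rewrite subsetD1 => /andP[].
have ltUt : (#|U| < t)%N.
  by rewrite -cardS (cardsD1 e S) eS add1n ltnS; exact: subset_leq_card.
have -> : (e |: U) :&: T = U :&: T.
  by apply/setP => j; rewrite !inE; case: eqP => // ->; rewrite (negbTE eT) !andbF.
rewrite cardsU1 eU add1n subnS -(prednK (_ : 0 < t - #|U|)%N) ?subn_gt0 //=.
by rewrite exprS; ring.
Qed.

End SubsetSums.

Lemma expn2_le_bin_mid k : 2 ^ k <= 'C(k.*2, k).
Proof.
elim: k => // k IH.
have binS_diag : 'C(k.*2.+2, k.+1) * k.+1 = k.*2.+2 * 'C(k.*2.+1, k).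
  by rewrite [RHS]mul_bin_diag mulnC.
have bin_mono : 'C(k.*2, k) <= 'C(k.*2.+1, k).
  by case: k {IH binS_diag} => // k; rewrite doubleS binS leq_addr.
rewrite doubleS expnS -(leq_pmul2r (ltn0Sn k)) binS_diag.
by move: IH bin_mono; rewrite -!mul2n; nia.
Qed.

Lemma expn2_le_bin n k : k.*2 <= n -> 2 ^ k <= 'C(n, k).
Proof. by move=> kn; apply: leq_trans (expn2_le_bin_mid k) (leq_bin2l _ kn). Qed.

Lemma expn_le_bin n r : r <= n -> n ^ r <= r ^ r * 'C(n, r).
Proof.
move=> rn; rewrite -(@leq_pmul2r r`!) ?fact_gt0 // -mulnA bin_ffact -ffactnn !ffact_prod.
have expn_prod c : c ^ r = \prod_(i < r) c by rewrite prod_nat_const card_ord.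
rewrite !expn_prod -!big_split /=; apply: leq_prod => i _.
by have := ltn_ord i; nia.
Qed.

Lemma expn2_half_log_le_bin n R : R * R <= n ->
  2 ^ ((trunc_log 2 n)./2 * R) <= 'C(n, R).
Proof.
move=> RRn; case: (posnP R) => [->|R_gt0]; first by rewrite muln0 bin0.
have n_gt0 : 0 < n by apply: leq_trans RRn; rewrite muln_gt0 R_gt0.
set h := (trunc_log 2 n)./2.
have hR_le : 2 ^ h * R <= n.
  have h2_le : 2 ^ h * 2 ^ h <= n.
    rewrite -expnD addnn; apply: leq_trans (trunc_logP (ltnSn 1) n_gt0).
    by rewrite leq_exp2l // -[X in _ <= X]odd_double_half leq_addl.
  rewrite leqNgt; apply/negP => lt_n.
  by have := ltn_mul lt_n lt_n; rewrite mulnACA ltnNge leq_mul.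
rewrite -(@leq_pmul2l (R ^ R)) ?expn_gt0 ?R_gt0 // mulnC expnM.
apply: leq_trans (expn_le_bin (leq_trans (leq_pmulr _ R_gt0) RRn)).
by rewrite -expnMn leq_exp2r.
Qed.

(* X = 2 ((log n + 1) R + 1), and [R log n = O(d)] by [expn2_half_log_le_bin]. *)
Lemma residue_modulus_bound n R d : 0 < d -> R <= d -> R * R <= n ->
  'C(n, R) <= 2 ^ d -> exists2 X, n ^ R < 2 ^ X./2 & X <= 10 * d.
Proof.
move=> d_gt0 R_le_d RRn binR; set l := trunc_log 2 n.
have hR_le_d : l./2 * R <= d.
  by rewrite -(@leq_exp2l 2) // (leq_trans (expn2_half_log_le_bin RRn)).
exists (l.+1 * R + 1).*2.
  rewrite doubleK; apply: (@leq_ltn_trans ((2 ^ l.+1) ^ R)).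
    have n_le : n <= 2 ^ l.+1 by apply/ltnW/trunc_log_ltn.
    by case: (posnP R) => [->|R_gt0] //; rewrite leq_exp2r.
  by rewrite -expnM ltn_exp2l // addn1.
have lR : l.+1 * R <= (l./2).*2 * R + 2 * R.
  rewrite -mulnDl leq_mul2r; apply/orP; right.
  by have := odd_double_half l; case: (odd l) => /=; lia.
by move: lR; rewrite -!mul2n; lia.
Qed.

Section InverseDifferences.
Local Open Scope ring_scope.

Lemma fdiffn_inv (F : numFieldType) (N k a : nat) : (0 < a)%N ->
  fdiffn k (fun x => N%:R / x%:R) a * ((a + k) ^_ k.+1)%:R = (-1) ^+ k * (k`! * N)%:R :> F.
Proof.
elim: k a => [|k IH] a a_gt0.
  by rewrite addn0 ffactn1 /= mulfVK ?expr0 ?mul1r ?mul1n // pnatr_eq0 -lt0n.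
have ffact_l : ((a + k.+1) ^_ k.+2 = (a + k.+1) * (a + k) ^_ k.+1)%N by rewrite addnS ffactSS.
have ffact_r : ((a + k.+1) ^_ k.+2 = (a.+1 + k) ^_ k.+1 * a)%N.
  by rewrite ffactnSr addSnnS addnK.
have := IH a.+1 isT; have := IH a a_gt0.
set h := (fun x : nat => _); set D1 := fdiffn k h a.+1; set D0 := fdiffn k h a.
move=> e0 e1; rewrite fdiffnSE -/D1 -/D0 mulrBl.
have -> : D1 * ((a + k.+1) ^_ k.+2)%:R = D1 * ((a.+1 + k) ^_ k.+1)%:R * a%:R.
  by rewrite ffact_r natrM mulrA.
have -> : D0 * ((a + k.+1) ^_ k.+2)%:R = D0 * ((a + k) ^_ k.+1)%:R * (a + k.+1)%:R.
  by rewrite ffact_l natrM mulrCA mulrC.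
rewrite e1 e0 factS !natrM natrD !exprS.
ring.
Qed.

(* The integer [fdiffn M.-1 (N / x) M.+1] equals
   [+-(M.-1)! N / (2M)^_M], so that [M * 'C(2M, M)] divides [N]. *)
Lemma expn2_le_common_multiple M N : (0 < N)%N ->
  (forall m, (0 < m <= M.*2)%N -> (m %| N)%N) -> (2 ^ M <= N)%N.
Proof.
move=> N_gt0 dvdN; case: M dvdN => [|M'] dvdN; first by rewrite expn0.
set M := M'.+1.
have zint : fdiffn M' (fun x => N%:R / x%:R : rat) M'.+2 \is a Num.int.
  apply: rpred_fdiffn => i iM.
  have dv : (M'.+2 + i %| N)%N by apply: dvdN; rewrite addSn ltn0Sn /=; lia.
  by rewrite -natr_div ?natr_int // unitfE pnatr_eq0.
have := @fdiffn_inv rat N M' M'.+2 isT.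
have -> : (M'.+2 + M' = M.*2)%N by rewrite /M -addnn addSnnS addnS.
case/intrP: zint => w ->.
rewrite -bin_ffact [M`!]factS natrM => /(congr1 (fun x : rat => `|x|)).
rewrite !normrM normrX normrN1 expr1n mul1r !normr_nat -intr_norm -abszE -pmulrn.
rewrite -!natrM => /eqP; rewrite eqr_nat => /eqP eqN.
have w_gt0 : (0 < `|w|)%N.
  rewrite absz_gt0; apply/eqP => w0; move: eqN; rewrite w0 /= mul0n.
  by have := fact_gt0 M'; nia.
have {eqN}eqN : (`|w| * 'C(M.*2, M) * M = N)%N.
  by apply/eqP; rewrite -(eqn_pmul2l (fact_gt0 M')) -eqN mulnC !mulnA.
apply: leq_trans (expn2_le_bin_mid M) _; rewrite -eqN.
exact: leq_trans (leq_pmull _ w_gt0) (leq_pmulr _ (ltn0Sn M')).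
Qed.

End InverseDifferences.

Section BinomialPolynomials.
Local Open Scope ring_scope.
Variable F : numFieldType.

Definition binom_poly (s : nat) : {poly F} :=
  (s`!%:R)^-1 *: \prod_(i <- iota 0 s) ('X - i%:R%:P).

Lemma size_binom_poly s : (size (binom_poly s) <= s.+1)%N.
Proof.
by apply: leq_trans (size_scale_leq _ _) _; rewrite size_prod_XsubC size_iota.
Qed.

Lemma horner_binom_poly s k : (binom_poly s).[k%:R] = 'C(k, s)%:R.
Proof.
have prod_ffact : \prod_(i <- iota 0 s) ((k%:R : F) - i%:R) = (k ^_ s)%:R.
  elim: s => [|s IH]; first by rewrite big_nil ffactn0.
  rewrite -addn1 iotaD big_cat big_seq1 /= IH addn1 ffactnSr natrM add0n.
  by case: (leqP s k) => sk; [rewrite natrB | rewrite ffact_small // !mul0r].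
rewrite hornerZ horner_prod.
under eq_bigr => i _ do rewrite hornerD hornerN hornerX hornerC.
rewrite prod_ffact -bin_ffact natrM mulrC mulrK //.
by rewrite unitfE pnatr_eq0 -lt0n fact_gt0.
Qed.

Lemma newton_interpolation (h : nat -> F) m L :
  (forall s, (m <= s <= L)%N -> fdiffn s h 0 = 0) ->
  forall k, (k <= L)%N -> h k = (\sum_(s < m) fdiffn s h 0 *: binom_poly s).[k%:R].
Proof.
move=> diff0 k kL; rewrite horner_sum.
under [RHS]eq_bigr => s _ do rewrite hornerZ horner_binom_poly mulr_natr.
pose N := (m + L).+1.
have truncate (a : nat) (G : nat -> F) : (a <= N)%N ->
    (forall s, (a <= s < N)%N -> G s = 0) -> \sum_(s < N) G s = \sum_(s < a) G s.
  move=> aN G0; rewrite [RHS](big_ord_widen N G aN) [RHS]big_mkcond /=.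
  apply: eq_bigr => i _; case: ifP => // /negbT; rewrite -leqNgt => ai.
  by rewrite G0 // ai ltn_ord.
have := newton_forward h 0 k; rewrite add0n => ->.
pose G s := fdiffn s h 0 *+ 'C(k, s).
rewrite -(truncate k.+1 G) -1?(truncate m G) //; try lia.
- move=> s /andP[ms _]; rewrite /G; case: (leqP s L) => sL; first by rewrite diff0 ?ms // mul0rn.
  by rewrite bin_small ?mulr0n //; apply: leq_ltn_trans sL.
- by move=> s /andP[ks _]; rewrite /G bin_small.
Qed.

(* [P * (P - 1)] has [L.+1] roots but degree at most [2 (m - 1) <= L]. *)
Lemma boolean_poly_const (P : {poly F}) m L : (0 < m)%N -> (size P <= m)%N ->
  (m.*2 <= L.+2)%N ->
  (forall k, (k <= L)%N -> P.[k%:R] = 0 \/ P.[k%:R] = 1) ->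
  forall k, (k <= L)%N -> P.[k%:R] = P.[0].
Proof.
move=> m_gt0 sizeP mL P01.
have sizeP1 : (size (P - 1)%R <= m)%N.
  apply: leq_trans (size_polyD _ _) _.
  by rewrite size_polyN size_poly1 geq_max sizeP.
have : P * (P - 1) = 0.
  apply/eqP; apply: contraT => PP1_neq0.
  pose pts : seq F := [seq i%:R | i <- iota 0 L.+1].
  have := max_poly_roots PP1_neq0 (rs := pts).
  have -> : all (root (P * (P - 1))) pts.
    apply/allP => x /mapP[k]; rewrite mem_iota ltnS => kL ->.
    rewrite /root hornerM hornerD hornerN hornerC.
    by case: (P01 k kL) => ->; rewrite ?mul0r ?subrr ?mulr0.
  rewrite map_inj_uniq ?iota_uniq; last by move=> i j /eqP; rewrite eqr_nat => /eqP.
  rewrite size_map size_iota => /(_ isT isT) /leq_trans /(_ (size_polyMleq _ _)).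
  by move: mL sizeP sizeP1; rewrite -mul2n; move: (size P) (size (P - 1)%R); lia.
move=> /eqP; rewrite mulf_eq0 subr_eq0 => /orP[] /eqP -> k _.
  by rewrite !horner0.
by rewrite !hornerC.
Qed.

Lemma fdiffn_boolean_const (h : nat -> F) m L : (0 < m)%N -> (m.*2 <= L.+2)%N ->
  (forall k, (k <= L)%N -> h k = 0 \/ h k = 1) ->
  (forall s, (m <= s <= L)%N -> fdiffn s h 0 = 0) ->
  forall k, (k <= L)%N -> h k = h 0.
Proof.
move=> m_gt0 mL h01 diff0.
have hP := newton_interpolation diff0.
have sizeP : (size (\sum_(s < m) fdiffn s h 0 *: binom_poly s)%R <= m)%N.
  apply: leq_trans (size_sum _ _ _) _; apply/bigmax_leqP => s _.
  exact: leq_trans (size_scale_leq _ _) (leq_trans (size_binom_poly s) (ltn_ord s)).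
move=> k kL; rewrite !hP //.
by apply: (boolean_poly_const m_gt0 sizeP mL) => // j jL; rewrite -hP //; apply: h01.
Qed.

End BinomialPolynomials.

Section RankLowerBound.
Local Open Scope ring_scope.
Variables (F : fieldType) (X Y : finType) (m : nat).
Variables (al : 'I_m -> X -> F) (be : 'I_m -> Y -> F).

(* The weights [wx], [wy] restrict to a rectangle, which makes the induction
   on [P] go through. *)
Definition protocol_form (P : protocol X Y) (wx : X -> F) (wy : Y -> F) : 'M[F]_m :=
  \matrix_(i, j) \sum_x \sum_y al i x * be j y * wx x * wy y * (peval P x y)%:R.

Lemma mxrank_protocol_form P wx wy : (\rank (protocol_form P wx wy) <= 2 ^ pdepth P)%N.
Proof.
have rank_split (A B : 'M[F]_m) d0 d1 : (\rank A <= 2 ^ d1)%N ->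
    (\rank B <= 2 ^ d0)%N -> (\rank (A + B)%R <= 2 ^ (maxn d0 d1).+1)%N.
  move=> rkA rkB; apply: leq_trans (mxrank_add _ _) _.
  rewrite expnS mul2n -addnn leq_add //.
    by apply: leq_trans rkA _; rewrite leq_exp2l // leq_maxr.
  by apply: leq_trans rkB _; rewrite leq_exp2l // leq_maxl.
elim: P wx wy => [b|a P0 IH0 P1 IH1|b P0 IH0 P1 IH1] wx wy /=.
- have -> : protocol_form (PLeaf X Y b) wx wy =
      (\col_i (\sum_x al i x * wx x)) *m (\row_j ((\sum_y be j y * wy y) * b%:R)).
    apply/matrixP => i j; rewrite !mxE big_ord1 !mxE mulr_suml.
    apply: eq_bigr => x _; rewrite mulr_suml mulr_sumr; apply: eq_bigr => y _ /=.
    ring.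
  by rewrite expn0; apply: leq_trans (mxrankM_maxl _ _) (rank_leq_col _).
- have -> : protocol_form (PAlice a P0 P1) wx wy =
      protocol_form P1 (fun x => wx x * (a x)%:R) wy +
      protocol_form P0 (fun x => wx x * (~~ a x)%:R) wy.
    apply/matrixP => i j; rewrite !mxE -big_split; apply: eq_bigr => x _ /=.
    rewrite -big_split; apply: eq_bigr => y _ /=.
    by case: (a x) => /=; ring.
  exact: rank_split.
- have -> : protocol_form (PBob b P0 P1) wx wy =
      protocol_form P1 wx (fun y => wy y * (b y)%:R) +
      protocol_form P0 wx (fun y => wy y * (~~ b y)%:R).
    apply/matrixP => i j; rewrite !mxE -big_split; apply: eq_bigr => x _ /=.
    rewrite -big_split; apply: eq_bigr => y _ /=.
    by case: (b y) => /=; ring.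
  exact: rank_split.
Qed.

Lemma scalar_form_le_exp_pdepth (G : X -> Y -> bool) (P : protocol X Y) (c : F) :
  (forall x y, peval P x y = G x y) -> c != 0 ->
  (forall i j, \sum_x \sum_y al i x * be j y * (G x y)%:R = c *+ (i == j)) ->
  (m <= 2 ^ pdepth P)%N.
Proof.
move=> PG c_neq0 formG.
have formP : protocol_form P (fun _ => 1) (fun _ => 1) = c%:M.
  apply/matrixP => i j; rewrite !mxE -formG.
  by apply: eq_bigr => x _; apply: eq_bigr => y _; rewrite PG !mulr1.
have := mxrank_protocol_form P (fun _ => 1) (fun _ => 1).
by rewrite formP -scalemx1 mxrank_scale_nz // mxrank1.
Qed.

End RankLowerBound.

Section SymmetricFunctions.
Variable n : nat.
Implicit Types (x : bvec n) (A : {set 'I_n}) (f : bvec n -> bool).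

Definition vec_of_set A : bvec n := [ffun i => i \in A].
Definition set_of_vec x : {set 'I_n} := [set i | x i].
Definition prefix_ones (w : nat) : bvec n := [ffun i : 'I_n => (i < w)%N].

Lemma set_of_vecK : cancel set_of_vec vec_of_set.
Proof. by move=> x; apply/ffunP => i; rewrite ffunE inE. Qed.

Lemma vec_of_setK : cancel vec_of_set set_of_vec.
Proof. by move=> A; apply/setP => i; rewrite inE ffunE. Qed.

Lemma hweight_vec_of_set A : hweight (vec_of_set A) = #|A|.
Proof. by rewrite /hweight -/(set_of_vec _) vec_of_setK. Qed.

Lemma hweight_le x : hweight x <= n.
Proof. by rewrite /hweight; apply: leq_trans (max_card _) _; rewrite card_ord. Qed.

Lemma hweight_prefix_ones w : w <= n -> hweight (prefix_ones w) = w.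
Proof.
move=> wn; rewrite /hweight.
have -> : [set i | prefix_ones w i] = [set widen_ord wn j | j : 'I_w].
  apply/setP => i; rewrite inE ffunE; apply/idP/imsetP => [iw|[j _ ->]].
    by exists (Ordinal iw) => //; apply: val_inj.
  by rewrite /= ltn_ord.
by rewrite card_imset ?card_ord // => j j' /(congr1 val) /= /val_inj.
Qed.

Lemma symmetric_prefix_ones f x : symmetric_fun f -> f x = f (prefix_ones (hweight x)).
Proof. by move=> f_sym; apply: f_sym; rewrite hweight_prefix_ones // hweight_le. Qed.

Local Open Scope ring_scope.

Definition profile f (w : nat) : rat := (f (prefix_ones w))%:R.

Lemma profile_eqE f v w :
  (profile f v == profile f w) = (f (prefix_ones v) == f (prefix_ones w)).
Proof. by rewrite /profile eqr_nat; case: (f _); case: (f _). Qed.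

(* The rows are indexed by the t-subsets S (test vector: the signed
   indicators of the subsets of S), the columns by the t-subsets T (test
   vector: the point [vec_of_set T]); by [sum_subsets_alternating_meet]
   the resulting form is [fdiffn t (profile f) 0] times the identity. *)
Lemma bin_le_exp_pdepth f (P : protocol (bvec n) (bvec n)) t :
  symmetric_fun f -> (forall x y, peval P x y = compAND f x y) ->
  (t <= n)%N -> fdiffn t (profile f) 0 != 0 -> ('C(n, t) <= 2 ^ pdepth P)%N.
Proof.
move=> f_sym Pf tn diff_neq0.
pose tsets := [set S : {set 'I_n} | #|S| == t].
have <- : #|tsets| = 'C(n, t) by rewrite card_draws card_ord.
pose S_ (i : 'I_#|tsets|) : {set 'I_n} := enum_val i.
have card_S i : #|S_ i| = t by have := enum_valP i; rewrite inE => /eqP.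
pose al i x : rat :=
  if set_of_vec x \subset S_ i then (-1) ^+ (t - #|set_of_vec x|) else 0.
pose be j y : rat := (y == vec_of_set (S_ j))%:R.
apply: (@scalar_form_le_exp_pdepth _ _ _ _ al be _ P _ Pf diff_neq0) => i j.
have fAND T U : (compAND f (vec_of_set T) (vec_of_set U))%:R = profile f #|T :&: U|.
  rewrite /compAND /profile (symmetric_prefix_ones _ f_sym); congr (f (prefix_ones _))%:R.
  by rewrite -hweight_vec_of_set; congr hweight; apply/ffunP => k; rewrite !ffunE inE.
have sum_be x : \sum_y al i x * be j y * (compAND f x y)%:R =
                al i x * (compAND f x (vec_of_set (S_ j)))%:R.
  rewrite (bigD1 (vec_of_set (S_ j))) //= big1 ?addr0; first by rewrite /be eqxx mulr1.
  by move=> y /negbTE y_neq; rewrite /be y_neq mulr0 mul0r.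
under eq_bigr => x _ do rewrite sum_be.
rewrite (reindex vec_of_set) /=; last first.
  by exists set_of_vec => x _; [exact: vec_of_setK | exact: set_of_vecK].
under eq_bigr => T _ do rewrite fAND /al vec_of_setK (fun_if (fun z => z * _)) mul0r.
rewrite -big_mkcond /= sum_subsets_alternating_meet ?card_S //.
by rewrite (inj_eq enum_val_inj); case: eqP.
Qed.

End SymmetricFunctions.

Lemma naadt_le_size n (f : bvec n -> bool) k Ss :
  NAADT_is f k -> determines f Ss -> k <= size Ss.
Proof. by move=> [_ k_min] detSs; apply: k_min; exists Ss. Qed.

Definition absdiff (a b : nat) := (a - b) + (b - a).

Lemma dvdn_absdiff m a b : a = b %[mod m] -> m %| absdiff a b.
Proof.
rewrite /absdiff; case: (leqP a b) => [ab|/ltnW ba] eq_mod.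
  by rewrite (eqP ab) add0n -eqn_mod_dvd // eq_mod.
by rewrite (eqP ba) addn0 -eqn_mod_dvd // eq_mod.
Qed.

Section QueryFamilies.
Variable n : nat.
Implicit Types (x y : bvec n) (S Z : {set 'I_n}) (f : bvec n -> bool).

Definition singleton_queries : seq {set 'I_n} := [seq [set i] | i <- enum 'I_n].

Lemma size_singleton_queries : size singleton_queries = n.
Proof. by rewrite size_map size_enum_ord. Qed.

Lemma singleton_queries_determine f : determines f singleton_queries.
Proof.
move=> x y eqxy; congr f; apply/ffunP => i.
have AND_S1 (z : bvec n) : AND_S [set i] z = z i.
  by apply/forall_inP/idP => [/(_ i (set11 i)) //|zi j /set1P ->].
by rewrite -!AND_S1 eqxy // map_f ?mem_enum.
Qed.

Lemma naadt_le_dim f k : NAADT_is f k -> k <= n.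
Proof.
move=> k_naadt; rewrite -size_singleton_queries.
exact: naadt_le_size k_naadt (singleton_queries_determine f).
Qed.

(* The query indexed by [(q, r)] is the residue class of [r] modulo [q.+1]. *)
Definition residue_queries (X : nat) : seq {set 'I_n} :=
  [seq [set i : 'I_n | i %% p.1.+1 == p.2] | p : 'I_X * 'I_X <- enum {: 'I_X * 'I_X}].

Lemma size_residue_queries X : size (residue_queries X) = X * X.
Proof. by rewrite size_map -cardE card_prod card_ord. Qed.

(* Otherwise [\prod_(z in Z) absdiff j z <= n ^ R] would be a positive common
   multiple of [1, ..., 2 * X./2]. *)
Lemma exists_separating_modulus X R Z (j : 'I_n) :
  n ^ R < 2 ^ X./2 -> #|Z| <= R -> j \notin Z ->
  exists q : 'I_X, forall z, z \in Z -> z %% q.+1 != j %% q.+1.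
Proof.
move=> nX ZR jZ.
case: (boolP [exists q : 'I_X, [forall z in Z, z %% q.+1 != j %% q.+1]]).
  by case/existsP => q /forall_inP sep; exists q.
rewrite negb_exists => /forallP noq; exfalso.
pose N := \prod_(z in Z) absdiff j z.
have absdiff_gt0 z : z \in Z -> 0 < absdiff j z.
  move=> zZ; have : (j : nat) != z by apply: contraNneq jZ => /val_inj ->.
  by rewrite /absdiff; lia.
have N_gt0 : 0 < N by rewrite prodn_cond_gt0.
have N_le : N <= n ^ R.
  apply: leq_trans (leq_pexp2l (leq_ltn_trans (leq0n j) (ltn_ord j)) ZR).
  rewrite -prod_nat_const; apply: leq_prod => z _.
  by rewrite /absdiff; have := ltn_ord j; have := ltn_ord z; lia.
suff : 2 ^ X./2 <= N by rewrite leqNgt (leq_ltn_trans N_le nX).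
apply: expn2_le_common_multiple => // m /andP[m_gt0 mX].
have mX' : m.-1 < X by have := odd_double_half X; lia.
have /forall_inPn [z zZ] := noq (Ordinal mX').
rewrite negbK /= prednK // => /eqP eq_mod.
by apply: dvdn_trans (dvdn_absdiff (esym eq_mod)) _; rewrite /N (bigD1 z) //= dvdn_mulr.
Qed.

Lemma residue_query_separates X R Z (j : 'I_n) :
  n ^ R < 2 ^ X./2 -> #|Z| <= R -> j \notin Z ->
  exists2 S, S \in residue_queries X & (j \in S) && (S \subset ~: Z).
Proof.
move=> nX ZR jZ; have [q sep] := exists_separating_modulus nX ZR jZ.
have rX : j %% q.+1 < X by apply: leq_trans (ltn_pmod _ _) (ltn_ord q).
exists [set i : 'I_n | i %% q.+1 == j %% q.+1].
  by apply/mapP; exists (q, Ordinal rX); rewrite ?mem_enum.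
rewrite inE eqxx /=; apply/subsetP => z; rewrite !inE => /eqP zj.
by apply/negP => /sep; rewrite zj eqxx.
Qed.

Definition zeros x : {set 'I_n} := [set i | ~~ x i].

Lemma card_zeros x : #|zeros x| = n - hweight x.
Proof.
have := cardsC [set i | x i]; rewrite card_ord => n_eq.
rewrite -[X in X - _]n_eq /hweight addKn (_ : zeros x = ~: [set i | x i]) //.
by apply/setP => i; rewrite !inE.
Qed.

Lemma AND_S_zeros S x : AND_S S x = (S \subset ~: zeros x).
Proof.
apply/forall_inP/subsetP => AND_Sx i iS; first by rewrite !inE negbK AND_Sx.
by have := AND_Sx i iS; rewrite !inE negbK.
Qed.

Definition decoded_zeros X x : {set 'I_n} :=
  [set j | all (fun S => (j \in S) ==> ~~ AND_S S x) (residue_queries X)].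

Lemma zeros_sub_decoded X x : zeros x \subset decoded_zeros X x.
Proof.
apply/subsetP => j jZ; rewrite inE; apply/allP => S _; apply/implyP => jS.
by rewrite AND_S_zeros; apply/negP => /subsetP /(_ j jS); rewrite inE jZ.
Qed.

Lemma decoded_zeros_eq X R x :
  n ^ R < 2 ^ X./2 -> #|zeros x| <= R -> decoded_zeros X x = zeros x.
Proof.
move=> nX ZR; apply/eqP; rewrite eqEsubset zeros_sub_decoded andbT.
apply/subsetP => j; apply: contraTT => jZ.
have [S Sq /andP[jS SZ]] := residue_query_separates nX ZR jZ.
by rewrite inE; apply/allPn; exists S; rewrite // jS AND_S_zeros SZ.
Qed.

Lemma residue_queries_determine f X R : n ^ R < 2 ^ X./2 ->
  (forall x y, hweight x + R < n -> hweight y + R < n -> f x = f y) ->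
  determines f (residue_queries X).
Proof.
move=> nX f_const x y eq_ans.
have eq_dec : decoded_zeros X x = decoded_zeros X y.
  by apply/setP => j; rewrite !inE; apply: eq_in_all => S /eq_ans ->.
have decoded_inj u v : decoded_zeros X u = decoded_zeros X v -> #|zeros u| <= R -> u = v.
  move=> eq_uv uR.
  have vu : zeros v \subset zeros u by rewrite -(decoded_zeros_eq nX uR) eq_uv zeros_sub_decoded.
  have vR : #|zeros v| <= R := leq_trans (subset_leq_card vu) uR.
  move/setP: eq_uv; rewrite (decoded_zeros_eq nX uR) (decoded_zeros_eq nX vR) => eq_uv.
  by apply/ffunP => i; move: (eq_uv i); rewrite !inE; case: (u i); case: (v i).
case: (leqP #|zeros x| R) => [xR|]; first by rewrite (decoded_inj x y eq_dec xR).
case: (leqP #|zeros y| R) => [yR|]; first by rewrite (decoded_inj y x (esym eq_dec) yR).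
by rewrite !card_zeros => yR xR; apply: f_const; lia.
Qed.

End QueryFamilies.

Section SymmetricProtocol.
Variables (n : nat) (f : bvec n -> bool) (P : protocol (bvec n) (bvec n)).
Hypotheses (f_sym : symmetric_fun f) (P_f : forall x y, peval P x y = compAND f x y).

Lemma pdepth_gt0 x y : f x != f y -> 0 < pdepth P.
Proof.
move: P_f; case: P => // b Pb neq_xy; exfalso.
have fb z : f z = b.
  have := Pb z [ffun => true]; rewrite /= /compAND => ->; congr f.
  by apply/ffunP => i; rewrite !ffunE andbT.
by move: neq_xy; rewrite !fb eqxx.
Qed.

(* A jump in the lower half forces a nonzero high-order difference. *)
Lemma low_jump_bound t : profile f t != profile f 0 -> t.*2 < n -> n <= 4 * pdepth P.
Proof.
move=> profile_jump tn; set L := n./2; set m := L./2.+1.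
have hL := odd_double_half L; have hn := odd_double_half n.
have oL : odd L <= 1 by case: (odd L).
have on : odd n <= 1 by case: (odd n).
have tL : t <= L by move: tn hn; rewrite -!mul2n; lia.
have [s /andP[ms sL] diff_s] :
    exists2 s, m <= s <= L & fdiffn s (profile f) 0 != 0%R.
  case: (boolP [exists s : 'I_L.+1, (m <= s) && (fdiffn s (profile f) 0 != 0%R)]).
    by case/existsP => s /andP[ms ds]; exists s => //; rewrite ms -ltnS ltn_ord.
  rewrite negb_exists => /forallP no_s; case/negP: profile_jump; apply/eqP.
  apply: (@fdiffn_boolean_const _ _ m L) => //.
  - by move: hL; rewrite /m -!mul2n; lia.
  - by move=> k _; rewrite /profile; case: (f _); [right | left].
  - move=> s /andP[ms sL]; have := no_s (Ordinal (sL : s < L.+1)).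
    by rewrite /= ms /= negbK => /eqP.
have s2n : s.*2 <= n by move: sL hn; rewrite /L -!mul2n; lia.
have sn : s <= n by apply: leq_trans s2n; rewrite -addnn leq_addl.
have := leq_trans (expn2_le_bin s2n) (bin_le_exp_pdepth f_sym P_f sn diff_s).
by rewrite leq_exp2l // => s_le; move: ms s_le hL hn; rewrite /m /L -!mul2n; lia.
Qed.

Section FirstJump.
Variable t : nat.
Hypotheses (t_le_n : t <= n) (profile_jump : profile f t != profile f 0)
  (profile_const : forall w, w < t -> profile f w = profile f 0).

Lemma bin_jump_le_exp_pdepth : 'C(n, t) <= 2 ^ pdepth P.
Proof.
apply: bin_le_exp_pdepth P_f t_le_n _ => //.
have t_gt0 : 0 < t by case: t profile_jump => //; rewrite eqxx.
by rewrite (fdiffn_step t_gt0) ?subr_eq0 // => i it; rewrite !add0n profile_const.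
Qed.

Lemma pdepth_gt0_of_jump : 0 < pdepth P.
Proof.
apply: (@pdepth_gt0 (prefix_ones n t) (prefix_ones n 0)).
by apply: contra profile_jump => /eqP; rewrite /profile => ->.
Qed.

Lemma f_below_jump x : hweight x < t -> f x = f (prefix_ones n 0).
Proof.
move=> xt; rewrite (symmetric_prefix_ones _ f_sym).
by apply/eqP; rewrite -profile_eqE profile_const.
Qed.

Lemma high_jump_bound k : n <= t.*2 -> NAADT_is f k -> k <= 100 * pdepth P ^ 2.
Proof.
move=> nt k_naadt; set d := pdepth P; set R := n - t.
have d_gt0 : 0 < d := pdepth_gt0_of_jump.
have binR : 'C(n, R) <= 2 ^ d by rewrite bin_sub // bin_jump_le_exp_pdepth.
have R2n : R.*2 <= n by move: nt t_le_n; rewrite /R -!mul2n; lia.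
have R_le_d : R <= d.
  by rewrite -(@leq_exp2l 2) // (leq_trans (expn2_le_bin R2n)).
case: (ltnP n (R * R)) => [nRR|RRn].
  by apply: leq_trans (naadt_le_dim k_naadt) _; have := leq_mul R_le_d R_le_d; nia.
have [X nX X_le] := residue_modulus_bound d_gt0 R_le_d RRn binR.
have f_const x y : hweight x + R < n -> hweight y + R < n -> f x = f y.
  by move=> hx hy; rewrite !f_below_jump //; move: hx hy; rewrite /R; lia.
have := naadt_le_size k_naadt (residue_queries_determine nX f_const).
rewrite size_residue_queries => /leq_trans; apply.
by have := leq_mul X_le X_le; nia.
Qed.

End FirstJump.

Lemma naadt_le_pdepth_sq k : NAADT_is f k -> k <= 100 * pdepth P ^ 2.
Proof.
move=> k_naadt.
case: (boolP [exists w : 'I_n.+1, profile f w != profile f 0]); last first.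
  rewrite negb_exists => /forallP no_jump.
  suff -> : k = 0 by [].
  apply/eqP; rewrite -leqn0; apply: (naadt_le_size (Ss := [::]) k_naadt) => x y _.
  have f_const z : f z = f (prefix_ones n 0).
    rewrite (symmetric_prefix_ones _ f_sym); apply/eqP; rewrite -profile_eqE.
    by have := no_jump (Ordinal (hweight_le z : hweight z < n.+1)); rewrite negbK.
  by rewrite !f_const.
case/existsP => w jump_w.
have jump : exists t, (t <= n) && (profile f t != profile f 0).
  by exists w; rewrite -ltnS ltn_ord.
have [t /andP[t_le_n jump_t] t_min] := ex_minnP jump.
have profile_const v : v < t -> profile f v = profile f 0.
  move=> vt; apply/eqP; apply: contraTT (vt) => jump_v; rewrite -leqNgt t_min //.
  by rewrite jump_v andbT (leq_trans (ltnW vt) t_le_n).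
case: (ltnP t.*2 n) => [low|high].
  apply: leq_trans (naadt_le_dim k_naadt) (leq_trans (low_jump_bound jump_t low) _).
  by rewrite expnS expn1; nia.
exact: (high_jump_bound t_le_n jump_t profile_const high k_naadt).
Qed.

End SymmetricProtocol.

Theorem theorem1p5 :
  exists C : nat, forall (n : nat) (f : bvec n -> bool) (k d : nat),
    symmetric_fun f -> NAADT_is f k -> Dcc_is (compAND f) d ->
    k <= C * d ^ 2.
Proof.
exists 100 => n f k d f_sym k_naadt [[P [P_f P_d]] _].
apply: leq_trans (naadt_le_pdepth_sq f_sym P_f k_naadt) _.
by rewrite leq_mul2l leq_exp2r ?P_d ?orbT.
Qed.
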